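(* Let $M$ be a matroid, $\psi\colon E(M)\to\Gamma$ a labeling to an abelian group $\Gamma$, and $w\colon E(M)\to\mathbb{R}$ a weight function. Suppose $M$ has at least one non-zero basis. Then for every minimum-weight basis $B$ of $M$ there exists a non-zero basis $B^*$ of $M$ that has minimum weight among all non-zero bases and satisfies $|B\setminus B^*|\le 1$.
   Context: For $S\subseteq E$, $\psi(S):=\sum_{x\in S}\psi(x)$ and $w(S):=\sum_{x\in S}w(x)$. A set $S$ is non-zero if $\psi(S)\neq 0$. *)

From HB Require Import structures.
From mathcomp Require Import all_boot all_order all_algebra.
From mathcomp Require Import reals.
Set Implicit Arguments. Unset Strict Implicit. Unset Printing Implicit Defensive.
Import Order.TTheory GRing.Theory Num.Theory.
Local Open Scope ring_scope.

Record matroid (E : finType) := Matroid {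
  indep : {set E} -> bool;
  indep0 : indep set0;
  indep_sub : forall A B : {set E}, A \subset B -> indep B -> indep A;
  indep_aug : forall A B : {set E}, indep A -> indep B -> (#|A| < #|B|)%N ->
     exists2 x, x \in B :\: A & indep (x |: A)
}.

Definition is_basis (E : finType) (M : matroid E) (B : {set E}) : bool :=
  indep M B && [forall X : {set E}, (indep M X && (B \subset X)) ==> (X == B)].

Definition lab_sum (E : finType) (G : zmodType) (psi : E -> G) (S : {set E}) : G :=
  \sum_(x in S) psi x.

Definition wsum (E : finType) (R : realType) (w : E -> R) (S : {set E}) : R :=
  \sum_(x in S) w x.

Definition nonzero (E : finType) (G : zmodType) (psi : E -> G) (S : {set E}) : bool :=
  lab_sum psi S != 0.

Definition min_weight_basis (E : finType) (R : realType) (M : matroid E)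
  (w : E -> R) (B : {set E}) : Prop :=
  is_basis M B /\ forall B' : {set E}, is_basis M B' -> wsum w B <= wsum w B'.

Definition min_weight_nonzero_basis (E : finType) (G : zmodType) (R : realType)
  (M : matroid E) (psi : E -> G) (w : E -> R) (B : {set E}) : Prop :=
  is_basis M B /\ nonzero psi B /\
  forall B' : {set E}, is_basis M B' -> nonzero psi B' -> wsum w B <= wsum w B'.

(** Let [B] be a minimum-weight basis with [psi(B) = 0] (otherwise [B] itself
    works) and [B'] a minimum-weight non-zero basis with [|B \ B'|] as small as
    possible.  If [|B \ B'| >= 2], pick [e] in [B \ B'] and a symmetric exchange
    partner [f] in [B' \ B], so that [B - e + f] and [B' - f + e] are both bases.
    Minimality of [B] gives [w(e) <= w(f)].  If [B' - f + e] is non-zero it is a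
    minimum-weight non-zero basis closer to [B]; otherwise
    [psi(B - e + f) = psi(f) - psi(e) = psi(B') <> 0], and [B - e + f] is a
    minimum-weight non-zero basis with [|B \ (B - e + f)| = 1]. *)
From HB Require Import structures.
From mathcomp Require Import all_boot all_order all_algebra.
From mathcomp Require Import reals.
From mathcomp Require Import lra.
Import Order.TTheory GRing.Theory Num.Theory.
Local Open Scope ring_scope.
Set Implicit Arguments. Unset Strict Implicit.

Section MatroidBases.
Variables (E : finType) (M : matroid E).

Lemma basis_indep B : is_basis M B -> indep M B.
Proof. by case/andP. Qed.

Lemma basis_indepU1 B x : is_basis M B -> indep M (x |: B) -> x \in B.
Proof.
case/andP=> _ /forallP /(_ (x |: B)); rewrite subsetUr andbT => maxB iXB.
by move: maxB; rewrite iXB => /eqP <-; rewrite setU11.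
Qed.

Lemma indep_card_le_basis B X : is_basis M B -> indep M X -> (#|X| <= #|B|)%N.
Proof.
move=> hB iX; rewrite leqNgt; apply/negP=> ltBX.
have [x] := indep_aug (basis_indep hB) iX ltBX.
by rewrite inE => /andP[xnB _] /(basis_indepU1 hB); rewrite (negPf xnB).
Qed.

Lemma indep_card_basis B X : is_basis M B -> indep M X -> (#|B| <= #|X|)%N ->
  is_basis M X.
Proof.
move=> hB iX leBX; rewrite /is_basis iX; apply/forallP=> Y.
apply/implyP=> /andP[iY sXY]; rewrite eq_sym eqEcard sXY /=.
by rewrite (leq_trans (indep_card_le_basis hB iY)).
Qed.

Lemma indep_extend I J : indep M I -> indep M J -> (#|I| <= #|J|)%N ->
  exists K : {set E}, [/\ I \subset K, K \subset I :|: J, indep M K & #|K| = #|J|].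
Proof.
move=> + iJ; move: {2}(#|J| - #|I|)%N (erefl (#|J| - #|I|)%N) => n.
elim: n I => [|n IH] I dIJ iI leIJ.
  exists I; rewrite subxx subsetUl iI; split=> //.
  by apply/eqP; rewrite eqn_leq leIJ -subn_eq0 dIJ.
have ltIJ : (#|I| < #|J|)%N by rewrite -subn_gt0 dIJ.
have [x] := indep_aug iI iJ ltIJ; rewrite inE => /andP[xnI xJ] ixI.
have cxI : #|x |: I| = #|I|.+1 by rewrite cardsU1 xnI.
have [|||K [sxIK sKxIJ iK cK]] := IH (x |: I); rewrite ?cxI ?subnSK //.
  by rewrite subnS dIJ.
exists K; split=> //; first exact: subset_trans (subsetU1 x I) sxIK.
apply: subset_trans sKxIJ _.
by rewrite !subUset subsetUr subsetUl sub1set inE xJ orbT.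
Qed.

(** Extend [Z] inside [Z :|: B] to a set [K] of basis size; if [e \notin K],
    augmenting [B :\ e] from [K] yields some [g] in [Z :\: B] exchangeable
    with [e]. *)
Lemma indepU1_no_exchange B e Z : is_basis M B -> e \in B -> indep M Z ->
  (forall g, g \in Z -> g \notin B -> ~~ indep M (g |: (B :\ e))) ->
  indep M (e |: Z).
Proof.
move=> hB eB iZ noexch; have iB := basis_indep hB.
have [K [sZK sKZB iK cK]] := indep_extend iZ iB (indep_card_le_basis hB iZ).
have [eK|enK] := boolP (e \in K).
  by apply: indep_sub iK; rewrite subUset sub1set eK sZK.
have iBe : indep M (B :\ e) by apply: indep_sub iB; apply: subsetDl.
have ltBeK : (#|B :\ e| < #|K|)%N by rewrite cK (cardsD1 e B) eB.
have [x] := indep_aug iBe iK ltBeK; rewrite !inE negb_and negbK => /andP[xBe xK].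
have xne : x != e by apply: contraNneq enK => <-.
rewrite (negPf xne) /= in xBe.
have /setUP[xZ|xB] := subsetP sKZB x xK; last by rewrite xB in xBe.
by move/negP: (noexch x xZ xBe).
Qed.

Lemma basis_exchange_sym B Bs e : is_basis M B -> is_basis M Bs ->
  e \in B -> e \notin Bs ->
  exists f, [/\ f \in Bs, f \notin B, is_basis M (f |: (B :\ e)) &
              is_basis M (e |: (Bs :\ f))].
Proof.
move=> hB hBs eB enBs; have iBs := basis_indep hBs.
pose Z := [set g in Bs | (g \in B) || ~~ indep M (g |: (B :\ e))].
have sZBs : Z \subset Bs by apply/subsetP=> g; rewrite inE => /andP[].
have ieZ : indep M (e |: Z).
  apply: (indepU1_no_exchange hB eB (indep_sub sZBs iBs)) => g.
  by rewrite inE => /andP[_ /orP[->|]].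
have [K [seZK sKeZBs iK cK]] :=
  indep_extend ieZ iBs (indep_card_le_basis hBs ieZ).
have sKeBs : K \subset e |: Bs.
  by apply: subset_trans sKeZBs _; rewrite subUset setUS ?subsetUr.
have [f] : exists f, f \in (e |: Bs) :\: K.
  apply/set0Pn; apply: contraTneq (leqnn #|Bs|) => /eqP.
  rewrite setD_eq0 => /subset_leq_card; rewrite cK cardsU1 enBs => ltBs.
  by rewrite -ltnNge.
rewrite !inE => /andP[fnK /orP[/eqP fe|fBs]].
  by move: fnK; rewrite fe (subsetP seZK) // setU11.
have : f \notin Z.
  by apply: contra fnK => fZ; apply: (subsetP seZK); rewrite in_setU1 fZ orbT.
rewrite inE fBs negb_or negbK /= => /andP[fnB ifB].
exists f; split=> //.
  apply: indep_card_basis hB ifB _.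
  by rewrite cardsU1 in_setD1 (negPf fnB) andbF (cardsD1 e B) eB.
have cKeBsf : #|e |: (Bs :\ f)| = #|K|.
  by rewrite cK cardsU1 in_setD1 (negPf enBs) andbF (cardsD1 f Bs) fBs.
have -> : e |: (Bs :\ f) = K.
  apply/eqP; rewrite eq_sym eqEcard cKeBsf leqnn andbT.
  apply/subsetP=> y yK; have /setU1P[->|yBs] := subsetP sKeBs y yK.
    exact: setU11.
  by rewrite !inE yBs andbT; apply/orP; right; apply: contraNneq fnK => <-.
by apply: indep_card_basis hBs iK _; rewrite cK.
Qed.

End MatroidBases.

Lemma sum_setU1D1 (E : finType) (V : zmodType) (F : E -> V) (S : {set E}) e f :
  e \in S -> f \notin S ->
  \sum_(x in f |: (S :\ e)) F x = \sum_(x in S) F x - F e + F f.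
Proof.
move=> eS fnS; rewrite big_setU1 /=; last by rewrite in_setD1 (negPf fnS) andbF.
rewrite [\sum_(x in S) F x](big_setD1 e eS) /=.
by rewrite addrC [F e + _]addrC addrK.
Qed.

Section MinWeightNonzeroBasis.
Variables (E : finType) (M : matroid E) (G : zmodType) (psi : E -> G).
Variables (R : realType) (w : E -> R).

Lemma exists_min_weight_nonzero_basis :
  (exists B0 : {set E}, is_basis M B0 /\ nonzero psi B0) ->
  exists Bs : {set E}, min_weight_nonzero_basis M psi w Bs.
Proof.
case=> B0 [hB0 nB0].
pose P := [pred X | is_basis M X && nonzero psi X].
have P0 : P B0 by rewrite inE hB0 nB0.
have [Bs /andP[hBs nBs] minBs] := @arg_minP _ _ _ B0 P (wsum w) P0.
by exists Bs; split=> //; split=> // B' hB' nB'; apply: minBs; apply/andP.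
Qed.

Variable B : {set E}.
Hypotheses (minB : min_weight_basis M w B) (psiB : lab_sum psi B = 0).

Lemma min_weight_nonzero_basis_closer Bs :
  min_weight_nonzero_basis M psi w Bs -> (1 < #|B :\: Bs|)%N ->
  exists2 Bs', min_weight_nonzero_basis M psi w Bs' &
    (#|B :\: Bs'| < #|B :\: Bs|)%N.
Proof.
case: minB => hB wB [hBs [nBs wBs]] gt1.
have [e] : exists e, e \in B :\: Bs by apply/set0Pn; rewrite -card_gt0 ltnW.
rewrite inE => /andP[enBs eB].
have [f [fBs fnB hBf hBse]] := basis_exchange_sym hB hBs eB enBs.
have := wB _ hBf; have := wB _ hBse.
rewrite /wsum !sum_setU1D1 // -!/(wsum w _) => wBse wBf.
have [nBse|zBse] := boolP (nonzero psi (e |: (Bs :\ f))).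
  exists (e |: (Bs :\ f)).
    split=> //; split=> // B' hB' nB'; apply: le_trans (wBs _ hB' nB').
    rewrite /wsum sum_setU1D1 // -/(wsum w Bs); lra.
  rewrite (cardsD1 e (B :\: Bs)) !inE enBs eB add1n ltnS subset_leq_card //.
  apply/subsetP=> x; rewrite !inE negb_or negb_and negbK.
  case/andP=> /andP[-> /orP[/eqP xf|->] xB] //.
  by rewrite -xf xB in fnB.
have psiBs : lab_sum psi Bs = psi f - psi e.
  move: zBse; rewrite /nonzero negbK /lab_sum sum_setU1D1 // -/(lab_sum psi Bs).
  by rewrite -addrA addr_eq0 opprD opprK addrC => /eqP.
exists (f |: (B :\ e)).
  split=> //; split.
    rewrite /nonzero /lab_sum sum_setU1D1 // -/(lab_sum psi B) psiB.
    by rewrite sub0r addrC -psiBs.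
  move=> B' hB' nB'; apply: le_trans (wBs _ hB' nB').
  rewrite /wsum sum_setU1D1 // -/(wsum w B) -/(wsum w Bs); lra.
apply: leq_ltn_trans gt1; rewrite -(cards1 e) subset_leq_card //.
apply/subsetP=> x; rewrite !inE negb_or negb_and negbK.
by case/andP=> /andP[_ /orP[// | /negPf->]].
Qed.

End MinWeightNonzeroBasis.

Theorem lemma3p2 (E : finType) (M : matroid E) (G : zmodType) (psi : E -> G)
  (R : realType) (w : E -> R) :
  (exists B0 : {set E}, is_basis M B0 /\ nonzero psi B0) ->
  forall B : {set E}, min_weight_basis M w B ->
  exists Bs : {set E}, min_weight_nonzero_basis M psi w Bs /\ (#|B :\: Bs| <= 1)%N.
Proof.
move=> exB0 B minB; have [hB wB] := minB.
have [nB|zB] := boolP (nonzero psi B).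
  exists B; rewrite setDv cards0; split=> //.
  by split=> //; split=> // B' hB' _; apply: wB.
have psiB : lab_sum psi B = 0 by apply/eqP; rewrite -[_ == 0]negbK.
have [Bs minBs] := exists_min_weight_nonzero_basis w exB0.
elim: {Bs}#|B :\: Bs| {-2}Bs (leqnn #|B :\: Bs|) minBs => [|n IH] Bs leBsn minBs.
  by exists Bs; split=> //; apply: leq_trans leBsn _.
have [le1|gt1] := leqP #|B :\: Bs| 1; first by exists Bs.
have [Bs' minBs' lt] := min_weight_nonzero_basis_closer minB psiB minBs gt1.
by apply: IH minBs'; rewrite -ltnS (leq_trans lt).
Qed.
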